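(* Let $G$ be a countable connected graph. Let $X\subseteq|G|$ be a closed subspace, and let $O_1,O_2$ be disjoint open subsets of $X$ with $X=O_1\cup O_2$. Then the set of edges of $G$ with one endvertex in $O_1$ and the other in $O_2$ is finite.
   Context: Graphs may have parallel edges and loops. The space $|G|$: a ray is a one-way infinite path; two rays are edge-equivalent if for every finite set $F$ of edges some component of $G-F$ contains subrays of both; the classes are the edge-ends of $G$. View edges as copies of $[0,1]$ and let $X_G$ be the quotient obtained by identifying them at common vertices. $|G|$ has point set $X_G$ together with all edge-ends; its open sets are the unions of sets $\widetilde C$, where $C$ is a connected component of $X_G\setminus Z$ for some finite set $Z$ of inner points of edges, and $\widetilde C$ is $C$ together with all edge-ends represented by a ray in $C$. *)

From Stdlib Require Import Reals List.
Open Scope R_scope.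
Set Implicit Arguments.

(* A multigraph: vertex type V, edge type E, ends e = (u, w) the two
   endvertices of e (u = w for a loop; parallel edges allowed). *)

Definition countable (T : Type) : Prop :=
  exists f : T -> nat, forall a b, f a = f b -> a = b.

Inductive conn_avoid (V E : Type) (ends : E -> V * V) (F : list E) : V -> V -> Prop :=
| ca_refl : forall u, conn_avoid ends F u u
| ca_step : forall u w x e, ~ In e F ->
    (ends e = (u, w) \/ ends e = (w, u)) ->
    conn_avoid ends F w x -> conn_avoid ends F u x.

Definition graph_connected (V E : Type) (ends : E -> V * V) : Prop :=
  forall u v, conn_avoid ends nil u v.

Inductive xpt (V E : Type) : Type :=
| PV : V -> xpt V E
| PI : E -> {t : R | 0 < t < 1} -> xpt V E.
Arguments PV {V E} _.
Arguments PI {V E} _ _.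

Definition edge_pt (V E : Type) (ends : E -> V * V) (e : E) (t : R) : xpt V E :=
  match Rlt_dec 0 t with
  | left h0 =>
      match Rlt_dec t 1 with
      | left h1 => PI e (exist (fun s => 0 < s < 1) t (conj h0 h1))
      | right _ => PV (snd (ends e))
      end
  | right _ => PV (fst (ends e))
  end.

(* Quotient topology on X_G: U is open iff its preimage in every copy
   [0,1] of an edge is open in [0,1]. *)
Definition xg_open (V E : Type) (ends : E -> V * V) (U : xpt V E -> Prop) : Prop :=
  forall e t, 0 <= t <= 1 -> U (edge_pt ends e t) ->
    exists d, 0 < d /\ forall s, 0 <= s <= 1 -> Rabs (s - t) < d ->
      U (edge_pt ends e s).

Definition xg_connected (V E : Type) (ends : E -> V * V) (A : xpt V E -> Prop) : Prop :=
  ~ exists U1 U2, xg_open ends U1 /\ xg_open ends U2 /\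
      (forall x, A x -> U1 x \/ U2 x) /\
      (exists x, A x /\ U1 x) /\ (exists x, A x /\ U2 x) /\
      (forall x, A x -> U1 x -> U2 x -> False).

Definition xg_component (V E : Type) (ends : E -> V * V) (S : xpt V E -> Prop)
  (x : xpt V E) : xpt V E -> Prop :=
  fun y => exists A, (forall z, A z -> S z) /\ xg_connected ends A /\ A x /\ A y.

Record ray (V E : Type) (ends : E -> V * V) : Type := Ray {
  rv : nat -> V;
  re : nat -> E;
  rv_inj : forall m n, rv m = rv n -> m = n;
  re_link : forall n, ends (re n) = (rv n, rv (S n)) \/ ends (re n) = (rv (S n), rv n)
}.

(* Edge-equivalence: for every finite edge set F, some component of G - F
   (the vertex class of x) contains subrays (tails from k1, k2) of both rays. *)
Definition edge_equiv (V E : Type) (ends : E -> V * V) (R1 R2 : ray ends) : Prop :=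
  forall F : list E, exists (x : V) (k1 k2 : nat),
    (forall n, (k1 <= n)%nat -> conn_avoid ends F x (rv R1 n) /\ ~ In (re R1 n) F) /\
    (forall n, (k2 <= n)%nat -> conn_avoid ends F x (rv R2 n) /\ ~ In (re R2 n) F).

Definition is_edge_end (V E : Type) (ends : E -> V * V) (P : ray ends -> Prop) : Prop :=
  exists R, forall R', P R' <-> edge_equiv R R'.

Definition gend (V E : Type) (ends : E -> V * V) : Type :=
  { P : ray ends -> Prop | is_edge_end P }.

Definition gpt (V E : Type) (ends : E -> V * V) : Type :=
  (xpt V E + gend ends)%type.

Definition ray_in (V E : Type) (ends : E -> V * V) (C : xpt V E -> Prop) (R : ray ends) : Prop :=
  forall n, C (PV (rv R n)) /\ forall t, C (PI (re R n) t).

Definition tilde (V E : Type) (ends : E -> V * V) (C : xpt V E -> Prop) : gpt ends -> Prop :=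
  fun p => match p with
           | inl x => C x
           | inr w => exists R, proj1_sig w R /\ ray_in C R
           end.

Definition basic_set (V E : Type) (ends : E -> V * V) (B : gpt ends -> Prop) : Prop :=
  exists (Z : list (xpt V E)) (x : xpt V E),
    (forall z, In z Z -> exists e t, z = PI e t) /\ ~ In x Z /\
    (forall p, B p <-> tilde (xg_component ends (fun y => ~ In y Z) x) p).

Definition g_open (V E : Type) (ends : E -> V * V) (U : gpt ends -> Prop) : Prop :=
  forall p, U p -> exists B, basic_set B /\ B p /\ (forall q, B q -> U q).

Definition g_closed (V E : Type) (ends : E -> V * V) (X : gpt ends -> Prop) : Prop :=
  g_open (fun p => ~ X p).

Definition g_open_in (V E : Type) (ends : E -> V * V) (X O : gpt ends -> Prop) : Prop :=
  exists U, g_open U /\ forall p, O p <-> X p /\ U p.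

From Pilot Require Import Defs.
From Stdlib Require Import Reals List Lia Lra Classical ClassicalEpsilon Wf_nat.

(* Suppose infinitely many edges cross between O1 and O2. Enumerate the edges
   and choose, for every n, a component of G minus the first n edges, nested
   in the previous one, that still contains infinitely many crossing edges.
   Either some vertex lies in all of these components, or a ray runs through
   them (from each vertex, take the first step of a shortest walk into the
   next component). A basic open set of |G| contains every vertex it can reach
   without using the finitely many edges it cuts, so every basic neighbourhood
   of this vertex, resp. of the end of this ray, contains both endvertices of
   some crossing edge. Such a point can lie neither in O1 nor in O2, as each
   is open in X and the crossing edge has an endvertex in the other, nor in
   the open complement of X. *)

Set Implicit Arguments.
Unset Strict Implicit.

Open Scope nat_scope.

Lemma ex_least (Q : nat -> Prop) :
  (exists n, Q n) -> exists n, Q n /\ forall m, Q m -> n <= m.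
Proof.
  intros HQ.
  destruct (dec_inh_nat_subset_has_unique_least_element Q (fun n => classic (Q n)) HQ)
    as [n [Hn _]].
  exists n; exact Hn.
Qed.

Section InfinitelyMany.
Variable A : Type.

Definition infinitely_many (Q : A -> Prop) : Prop :=
  forall l : list A, exists a, Q a /\ ~ In a l.

Lemma infinitely_many_mono (P Q : A -> Prop) :
  (forall a, P a -> Q a) -> infinitely_many P -> infinitely_many Q.
Proof. intros HPQ HP l. destruct (HP l) as [a [Ha Hl]]. eauto. Qed.

Lemma infinitely_many_intro (Q : A -> Prop) :
  ~ (exists l, forall a, Q a -> In a l) -> infinitely_many Q.
Proof.
  intros Hfin l. apply NNPP. intros Hl. apply Hfin. exists l. intros a Ha.
  apply NNPP. intros Hal. apply Hl. eauto.
Qed.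

Lemma not_infinitely_many (Q : A -> Prop) :
  ~ infinitely_many Q -> exists l, forall a, Q a -> In a l.
Proof.
  intros HQ. apply NNPP. intros Hfin. exact (HQ (infinitely_many_intro Hfin)).
Qed.

Lemma infinitely_many_or (P Q : A -> Prop) :
  infinitely_many (fun a => P a \/ Q a) -> infinitely_many P \/ infinitely_many Q.
Proof.
  intros HPQ. apply NNPP. intros Hn. apply not_or_and in Hn as [HP HQ].
  destruct (not_infinitely_many HP) as [l1 Hl1].
  destruct (not_infinitely_many HQ) as [l2 Hl2].
  destruct (HPQ (l1 ++ l2)) as [a [Ha Hl]]. apply Hl, in_or_app.
  destruct Ha; auto.
Qed.

Lemma infinitely_many_exists_in (B : Type) (rs : list B) (Q : B -> A -> Prop) :
  infinitely_many (fun a => exists r, In r rs /\ Q r a) ->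
  exists r, In r rs /\ infinitely_many (Q r).
Proof.
  induction rs as [|r rs IH]; intros H.
  - destruct (H nil) as [a [[r [[] _]] _]].
  - destruct (@infinitely_many_or (Q r) (fun a => exists r', In r' rs /\ Q r' a))
      as [Hr | Hrs].
    + eapply infinitely_many_mono; [|exact H].
      intros a [r' [[<- | Hr'] Ha]]; eauto.
    + exists r. split; [left|]; auto.
    + destruct (IH Hrs) as [r' [Hr' Hq]]. exists r'. split; [right|]; auto.
Qed.
End InfinitelyMany.

Section Walks.
Variables (V E : Type) (ends : E -> V * V).

Definition joins (e : E) (u w : V) : Prop := ends e = (u, w) \/ ends e = (w, u).

Lemma joins_ends e : joins e (fst (ends e)) (snd (ends e)).
Proof. left. destruct (ends e); reflexivity. Qed.

Lemma conn_avoid_trans F u w x :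
  conn_avoid ends F u w -> conn_avoid ends F w x -> conn_avoid ends F u x.
Proof. induction 1; intros; [assumption | eapply ca_step; eauto]. Qed.

Lemma conn_avoid_edge F e u w : ~ In e F -> joins e u w -> conn_avoid ends F u w.
Proof. intros He Hj. eapply ca_step; [exact He | exact Hj | apply ca_refl]. Qed.

Lemma conn_avoid_sym F u x : conn_avoid ends F u x -> conn_avoid ends F x u.
Proof.
  induction 1 as [|u w x e He Hj _ IH]; [apply ca_refl|].
  apply (conn_avoid_trans IH). apply (conn_avoid_edge He). unfold joins in *; tauto.
Qed.

Lemma conn_avoid_weaken F F' u x :
  incl F' F -> conn_avoid ends F u x -> conn_avoid ends F' u x.
Proof. intros HF. induction 1; [apply ca_refl | eapply ca_step; eauto]. Qed.

(* Deleting one more edge e: either the walk survives, or its part after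
   the last use of e starts at an endvertex of e. *)
Lemma conn_avoid_cons F e u x : conn_avoid ends F u x ->
  conn_avoid ends (e :: F) u x \/ conn_avoid ends (e :: F) (fst (ends e)) x \/
  conn_avoid ends (e :: F) (snd (ends e)) x.
Proof.
  induction 1 as [u|u w x e' He' Hj _ IH]; [left; apply ca_refl|].
  destruct IH as [IH | IH]; [|right; exact IH].
  destruct (classic (e' = e)) as [-> | Hne].
  - right. destruct Hj as [Hj | Hj]; rewrite Hj; simpl; auto.
  - left. eapply ca_step; [|exact Hj | exact IH].
    intros [Heq | Hin]; [exact (Hne (eq_sym Heq)) | exact (He' Hin)].
Qed.

Lemma finitely_many_components u F : exists rs : list V, forall x,
  conn_avoid ends nil u x -> exists r, In r rs /\ conn_avoid ends F r x.
Proof.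
  induction F as [|e F [rs Hrs]].
  - exists (u :: nil). intros x Hx. exists u. split; [left|]; auto.
  - exists (fst (ends e) :: snd (ends e) :: rs). intros x Hx.
    destruct (Hrs x Hx) as [r [Hr Hrx]].
    destruct (conn_avoid_cons e Hrx) as [H | [H | H]];
      eexists; (split; [|exact H]); simpl; auto.
Qed.

Inductive walk (F : list E) : nat -> V -> V -> Prop :=
| walk_nil u : walk F 0 u u
| walk_cons n u w x e : ~ In e F -> joins e u w -> walk F n w x -> walk F (S n) u x.

Lemma conn_avoid_walk F u x : conn_avoid ends F u x -> exists n, walk F n u x.
Proof.
  induction 1 as [u|u w x e He Hj _ [n Hn]].
  - exists 0. apply walk_nil.
  - exists (S n). eapply walk_cons; eauto.
Qed.

Definition tail_in (R : ray ends) (Q : V -> Prop) : Prop :=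
  exists k, forall n, k <= n -> Q (rv R n).

Section Rich.
Variable bad : E -> Prop.

Definition edge_in (P : V -> Prop) (e : E) : Prop := P (fst (ends e)) /\ P (snd (ends e)).

Definition rich (P : V -> Prop) : Prop := infinitely_many (fun e => bad e /\ edge_in P e).

Lemma rich_mono (P Q : V -> Prop) : (forall v, P v -> Q v) -> rich P -> rich Q.
Proof.
  intros HPQ. apply infinitely_many_mono. intros e [Hb [H1 H2]]. repeat split; auto.
Qed.

Lemma rich_inhabited P : rich P -> exists v, P v.
Proof. intros HP. destruct (HP nil) as [e [[_ [Hv _]] _]]. eauto. Qed.

Hypothesis conn : graph_connected ends.

(* Pigeonhole over the finitely many components of G - F. *)
Lemma rich_split F P : rich P -> exists r, rich (fun v => P v /\ conn_avoid ends F r v).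
Proof.
  intros HP. destruct (rich_inhabited HP) as [u _].
  destruct (finitely_many_components u F) as [rs Hrs].
  destruct (@infinitely_many_exists_in _ _ rs
    (fun r e => bad e /\ edge_in (fun v => P v /\ conn_avoid ends F r v) e)) as [r [_ Hr]].
  - intros l. destruct (HP (F ++ l)) as [e [[Hb [Hu Hw]] Hl]].
    assert (HeF : ~ In e F) by (intro H; apply Hl, in_or_app; auto).
    destruct (Hrs (fst (ends e)) (conn _ _)) as [r [Hr Hru]].
    exists e. split; [|intro H; apply Hl, in_or_app; auto].
    exists r. repeat split; auto.
    exact (conn_avoid_trans Hru (conn_avoid_edge HeF (joins_ends e))).
  - exists r. exact Hr.
Qed.
End Rich.
End Walks.

Section Enumeration.
Variables (E : Type) (f : E -> nat).
Hypothesis f_inj : forall a b, f a = f b -> a = b.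

Definition edge_of_index (k : nat) : list E :=
  match excluded_middle_informative (exists e, f e = k) with
  | left h => proj1_sig (constructive_indefinite_description _ h) :: nil
  | right _ => nil
  end.

Definition first_edges (n : nat) : list E := flat_map edge_of_index (seq 0 n).

Lemma In_first_edges e n : In e (first_edges n) <-> f e < n.
Proof.
  unfold first_edges, edge_of_index. rewrite in_flat_map. split.
  - intros [k [Hk He]]. apply in_seq in Hk.
    destruct excluded_middle_informative as [h|]; [|destruct He].
    destruct (constructive_indefinite_description _ h) as [e' He'].
    destruct He as [<- | []]. simpl. lia.
  - intros Hn. exists (f e). split; [apply in_seq; lia|].
    destruct excluded_middle_informative as [h | h]; [|exfalso; eauto].
    destruct (constructive_indefinite_description _ h) as [e' He']. left. auto.
Qed.

Lemma first_edges_mono m n : m <= n -> incl (first_edges m) (first_edges n).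
Proof. intros Hmn e. rewrite !In_first_edges. lia. Qed.

Lemma first_edges_exhaust (L : list E) : exists N, incl L (first_edges N).
Proof.
  induction L as [|a L [N HN]]; [exists 0; intros e []|].
  exists (Nat.max (S (f a)) N). intros e [<- | He]; apply In_first_edges.
  - lia.
  - apply HN, In_first_edges in He. lia.
Qed.
End Enumeration.

Section RayThroughNestedComponents.
Variables (V E : Type) (ends : E -> V * V) (Fs : nat -> list E) (P : nat -> V -> Prop).
Hypothesis P_full : forall v, P 0 v.
Hypothesis P_decr : forall n v, P (S n) v -> P n v.
Hypothesis P_conn : forall n v w, P n v -> P n w -> conn_avoid ends (Fs n) v w.
Hypothesis P_closed : forall n v w, P n v -> conn_avoid ends (Fs n) v w -> P n w.
Hypothesis P_inhabited : forall n, exists v, P n v.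
Hypothesis P_vanish : forall v, exists n, ~ P n v.

Lemma P_le m n v : m <= n -> P n v -> P m v.
Proof. induction 1; auto. Qed.

Lemma depth_exists c : exists d, P d c /\ ~ P (S d) c.
Proof.
  destruct (ex_least (P_vanish c)) as [[|d] [Hd Hmin]]; [elim (Hd (P_full c))|].
  exists d. split; [|exact Hd].
  apply NNPP. intros H. specialize (Hmin d H). lia.
Qed.

Definition depth (c : V) : nat :=
  proj1_sig (constructive_indefinite_description _ (depth_exists c)).

Lemma depth_spec c : P (depth c) c /\ ~ P (S (depth c)) c.
Proof. exact (proj2_sig (constructive_indefinite_description _ (depth_exists c))). Qed.

Lemma le_depth n c : P n c -> n <= depth c.
Proof.
  intros Hn. destruct (Nat.le_gt_cases n (depth c)) as [|Hlt]; [assumption|].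
  exfalso. apply (proj2 (depth_spec c)). exact (P_le Hlt Hn).
Qed.

Lemma depth_unique d c : P d c -> ~ P (S d) c -> depth c = d.
Proof.
  intros Hd HSd. apply le_depth in Hd.
  destruct (Nat.le_gt_cases (depth c) d) as [|Hlt]; [lia|].
  exfalso. exact (HSd (P_le Hlt (proj1 (depth_spec c)))).
Qed.

Definition reaches_deeper (c : V) (k : nat) : Prop :=
  exists y, walk ends (Fs (depth c)) k c y /\ P (S (depth c)) y.

Lemma reaches_deeper_exists c : exists k, reaches_deeper c k.
Proof.
  destruct (P_inhabited (S (depth c))) as [y Hy].
  destruct (conn_avoid_walk (P_conn (proj1 (depth_spec c)) (P_decr Hy))) as [k Hk].
  exists k, y. auto.
Qed.

Definition dist (c : V) : nat :=
  proj1_sig (constructive_indefinite_description _ (ex_least (reaches_deeper_exists c))).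

Lemma dist_spec c : reaches_deeper c (dist c) /\ forall k, reaches_deeper c k -> dist c <= k.
Proof.
  exact (proj2_sig (constructive_indefinite_description _ (ex_least (reaches_deeper_exists c)))).
Qed.

Lemma dist_pos c : 0 < dist c.
Proof.
  destruct (dist_spec c) as [[y [Hw Hy]] _].
  destruct (dist c); [|lia].
  inversion Hw; subst. exfalso. exact (proj2 (depth_spec y) Hy).
Qed.

(* The first step of a shortest walk from c into P (S (depth c)). *)
Lemma step_exists c : exists ew : E * V,
  ~ In (fst ew) (Fs (depth c)) /\ joins ends (fst ew) c (snd ew) /\
  exists y, walk ends (Fs (depth c)) (pred (dist c)) (snd ew) y /\ P (S (depth c)) y.
Proof.
  pose proof (dist_pos c) as Hpos. destruct (dist_spec c) as [[y [Hw Hy]] _].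
  destruct (dist c) as [|k]; [lia|].
  inversion Hw as [|? ? w ? e He Hj Hw']; subst. exists (e, w). simpl. eauto.
Qed.

Definition step (c : V) : E * V :=
  proj1_sig (constructive_indefinite_description _ (step_exists c)).

Lemma step_spec c :
  ~ In (fst (step c)) (Fs (depth c)) /\ joins ends (fst (step c)) c (snd (step c)) /\
  exists y, walk ends (Fs (depth c)) (pred (dist c)) (snd (step c)) y /\ P (S (depth c)) y.
Proof. exact (proj2_sig (constructive_indefinite_description _ (step_exists c))). Qed.

Definition key_lt (a b : V) : Prop :=
  depth a < depth b \/ (depth a = depth b /\ dist b < dist a).

Lemma key_lt_step c : key_lt c (snd (step c)).
Proof.
  destruct (step_spec c) as [He [Hj [y [Hw Hy]]]]. set (w := snd (step c)) in *.
  destruct (depth_spec c) as [Hc _].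
  destruct (classic (P (S (depth c)) w)) as [Hdeep | Hshallow].
  - left. apply le_depth in Hdeep. lia.
  - right.
    assert (Hd : depth w = depth c).
    { apply depth_unique; [|exact Hshallow].
      exact (P_closed Hc (conn_avoid_edge He Hj)). }
    split; [symmetry; exact Hd|].
    assert (dist w <= pred (dist c)) by (apply dist_spec; exists y; rewrite Hd; auto).
    pose proof (dist_pos c). lia.
Qed.

Section Ray.
Variable v0 : V.

Definition ray_vertex (i : nat) : V := Nat.iter i (fun c => snd (step c)) v0.

Lemma key_lt_ray i j : i < j -> key_lt (ray_vertex i) (ray_vertex j).
Proof.
  induction 1 as [|j _ IH]; [apply key_lt_step|].
  pose proof (key_lt_step (ray_vertex j)). unfold key_lt in *. simpl. lia.
Qed.

Lemma ray_vertex_inj m n : ray_vertex m = ray_vertex n -> m = n.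
Proof.
  intros Hmn. destruct (Nat.lt_trichotomy m n) as [H | [H | H]]; auto;
    apply key_lt_ray in H; rewrite Hmn in H; unfold key_lt in H; lia.
Qed.

Lemma ray_edge_joins n :
  joins ends (fst (step (ray_vertex n))) (ray_vertex n) (ray_vertex (S n)).
Proof. exact (proj1 (proj2 (step_spec _))). Qed.

Definition nested_ray : ray ends :=
  Ray ends ray_vertex (fun n => fst (step (ray_vertex n))) ray_vertex_inj ray_edge_joins.

Lemma depth_increases k i : dist (ray_vertex i) <= k ->
  exists j, i <= j /\ depth (ray_vertex i) < depth (ray_vertex j).
Proof.
  revert i. induction k as [|k IH]; intros i Hi; [pose proof (dist_pos (ray_vertex i)); lia|].
  destruct (key_lt_step (ray_vertex i)) as [Hlt | [Heq Hdist]].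
  - exists (S i). split; [lia | exact Hlt].
  - destruct (IH (S i)) as [j [Hij Hj]]; [simpl; lia|].
    exists j. split; [lia|]. simpl in Hj. lia.
Qed.

Lemma nested_ray_tail N : tail_in nested_ray (P N).
Proof.
  assert (Hdeep : exists k, N <= depth (ray_vertex k)).
  { induction N as [|N [k Hk]]; [exists 0; lia|].
    destruct (depth_increases (le_n (dist (ray_vertex k)))) as [j [_ Hj]]. exists j. lia. }
  destruct Hdeep as [k Hk]. exists k. intros n Hn. simpl.
  apply (P_le (n := depth (ray_vertex n))); [|apply depth_spec].
  destruct (Nat.eq_dec k n) as [<- | Hne]; [lia|].
  destruct (key_lt_ray (i := k) (j := n)) as [|[]]; lia.
Qed.
End Ray.

Theorem ray_through_nested : exists R : ray ends, forall N, tail_in R (P N).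
Proof.
  destruct (P_inhabited 0) as [v0 _]. exists (nested_ray v0). exact (nested_ray_tail v0).
Qed.
End RayThroughNestedComponents.

Section NestedComponents.
Variables (V E : Type) (ends : E -> V * V) (bad : E -> Prop) (f : E -> nat).
Hypothesis f_inj : forall a b, f a = f b -> a = b.
Hypothesis conn : graph_connected ends.
Variable v0 : V.

Definition refine_component (n : nat) (Q : V -> Prop) : V -> Prop :=
  let r := epsilon (inhabits v0)
    (fun r => rich ends bad (fun v => Q v /\ conn_avoid ends (first_edges f n) r v)) in
  fun v => Q v /\ conn_avoid ends (first_edges f n) r v.

Fixpoint nested (n : nat) : V -> Prop :=
  match n with
  | 0 => fun _ => True
  | S m => refine_component (S m) (nested m)
  end.

Hypothesis rich_all : rich ends bad (fun _ => True).

Lemma nested_rich n : rich ends bad (nested n).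
Proof.
  induction n as [|n IH]; [exact rich_all|].
  exact (epsilon_spec (inhabits v0) _ (rich_split conn (first_edges f (S n)) IH)).
Qed.

Lemma nested_decr n v : nested (S n) v -> nested n v.
Proof. exact (@proj1 _ _). Qed.

Lemma nested_conn n v w : nested n v -> nested n w -> conn_avoid ends (first_edges f n) v w.
Proof.
  destruct n as [|n]; [intros; apply conn|].
  intros [_ Hv] [_ Hw]. exact (conn_avoid_trans (conn_avoid_sym Hv) Hw).
Qed.

Lemma nested_closed n v w :
  nested n v -> conn_avoid ends (first_edges f n) v w -> nested n w.
Proof.
  induction n as [|n IH]; [trivial|].
  intros [Hv Hrv] Hvw. split.
  - apply (IH Hv). apply (conn_avoid_weaken (first_edges_mono f_inj (Nat.le_succ_diag_r n))), Hvw.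
  - exact (conn_avoid_trans Hrv Hvw).
Qed.

Lemma nested_conn_avoid F n x y :
  incl F (first_edges f n) -> nested n x -> nested n y -> conn_avoid ends F x y.
Proof. intros HF Hx Hy. exact (conn_avoid_weaken HF (nested_conn Hx Hy)). Qed.

Theorem bad_edges_concentrate :
  (exists v, forall F, rich ends bad (conn_avoid ends F v)) \/
  (exists R : ray ends, forall F, exists x,
     rich ends bad (conn_avoid ends F x) /\ tail_in R (conn_avoid ends F x)).
Proof.
  destruct (classic (exists v, forall n, nested n v)) as [[v Hv] | Hnone].
  - left. exists v. intros F. destruct (first_edges_exhaust f_inj F) as [N HN].
    apply (rich_mono (fun w Hw => nested_conn_avoid HN (Hv N) Hw)), nested_rich.
  - right.
    assert (Hvanish : forall v, exists n, ~ nested n v).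
    { intros v. apply not_all_ex_not. intros Hv. apply Hnone. eauto. }
    destruct (ray_through_nested (fun _ => I) nested_decr nested_conn nested_closed
                (fun n => rich_inhabited (nested_rich n)) Hvanish) as [R HR].
    exists R. intros F. destruct (first_edges_exhaust f_inj F) as [N HN].
    destruct (HR N) as [k Hk].
    exists (rv R k). split.
    + apply (rich_mono (fun w Hw => nested_conn_avoid HN (Hk k (le_n k)) Hw)), nested_rich.
    + exists k. intros n Hn. exact (nested_conn_avoid HN (Hk k (le_n k)) (Hk n Hn)).
Qed.
End NestedComponents.

Open Scope R_scope.

Definition unit_open (g : R -> Prop) : Prop :=
  forall t, 0 <= t <= 1 -> g t ->
    exists d, 0 < d /\ forall s, 0 <= s <= 1 -> Rabs (s - t) < d -> g s.

(* Let s be the supremum of the t in [t1, t2] with [t1, t] inside g1: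
   whichever of g1, g2 contains s, openness contradicts the choice of s. *)
Lemma unit_interval_connected_lt (g1 g2 : R -> Prop) t1 t2 :
  unit_open g1 -> unit_open g2 ->
  (forall t, 0 <= t <= 1 -> g1 t \/ g2 t) ->
  (forall t, 0 <= t <= 1 -> g1 t -> g2 t -> False) ->
  0 <= t1 -> t1 < t2 -> t2 <= 1 -> g1 t1 -> g2 t2 -> False.
Proof.
  intros o1 o2 cov disj h1 h12 h2 g1t1 g2t2.
  set (S := fun t => t1 <= t <= t2 /\ forall u, t1 <= u <= t -> g1 u).
  assert (St1 : S t1).
  { split; [lra|]. intros u hu. replace u with t1 by lra. exact g1t1. }
  destruct (completeness S) as [s [Hub Hlub]].
  { exists t2. intros x [hx _]. lra. }
  { exists t1. exact St1. }
  assert (hs1 : t1 <= s) by exact (Hub t1 St1).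
  assert (hs2 : s <= t2) by (apply Hlub; intros x [hx _]; lra).
  assert (below : forall u, t1 <= u < s -> g1 u).
  { intros u hu. apply NNPP. intros hn.
    assert (s <= u); [|lra].
    apply Hlub. intros x [hx hx']. destruct (Rle_lt_dec x u) as [|hux]; [assumption|].
    exfalso. apply hn, hx'. lra. }
  destruct (cov s ltac:(lra)) as [gs | gs].
  - destruct (Req_dec s t2) as [-> | ne]; [exact (disj t2 ltac:(lra) gs g2t2)|].
    destruct (o1 s ltac:(lra) gs) as [d [hd Hd]].
    set (s' := Rmin (s + d / 2) t2).
    assert (m1 : s' <= t2) by apply Rmin_r.
    assert (m2 : s' <= s + d / 2) by apply Rmin_l.
    assert (m3 : s < s') by (unfold s'; apply Rmin_case; lra).
    assert (s' <= s); [|lra].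
    apply Hub. split; [lra|]. intros u hu.
    destruct (Rlt_le_dec u s); [apply below; lra|].
    apply Hd; [lra|]. apply Rabs_def1; lra.
  - destruct (Req_dec s t1) as [-> | ne]; [exact (disj t1 ltac:(lra) g1t1 gs)|].
    destruct (o2 s ltac:(lra) gs) as [d [hd Hd]].
    set (u := Rmax t1 (s - d / 2)).
    assert (hu1 : t1 <= u) by apply Rmax_l.
    assert (hu2 : s - d / 2 <= u) by apply Rmax_r.
    assert (hu3 : u < s) by (unfold u; apply Rmax_case; lra).
    apply (disj u); [lra | apply below; lra|].
    apply Hd; [lra|]. apply Rabs_def1; lra.
Qed.

Lemma unit_interval_connected (g1 g2 : R -> Prop) t1 t2 :
  unit_open g1 -> unit_open g2 ->
  (forall t, 0 <= t <= 1 -> g1 t \/ g2 t) ->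
  (forall t, 0 <= t <= 1 -> g1 t -> g2 t -> False) ->
  0 <= t1 <= 1 -> 0 <= t2 <= 1 -> g1 t1 -> g2 t2 -> False.
Proof.
  intros o1 o2 cov disj h1 h2 g1t g2t.
  destruct (Rtotal_order t1 t2) as [l | [-> | l]].
  - apply (unit_interval_connected_lt o1 o2 cov disj (t1 := t1) (t2 := t2)); auto; lra.
  - exact (disj t2 h2 g1t g2t).
  - apply (unit_interval_connected_lt o2 o1 (t1 := t2) (t2 := t1)); auto; try lra.
    + intros t ht. destruct (cov t ht); auto.
    + intros t ht a b. exact (disj t ht b a).
Qed.

Section SpaceOfGraph.
Variables (V E : Type) (ends : E -> V * V).

Lemma edge_pt_0 e : edge_pt ends e 0 = PV (fst (ends e)).
Proof. unfold edge_pt. destruct (Rlt_dec 0 0) as [h|]; [exfalso; lra | reflexivity]. Qed.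

Lemma edge_pt_1 e : edge_pt ends e 1 = PV (snd (ends e)).
Proof.
  unfold edge_pt. destruct (Rlt_dec 0 1); [|exfalso; lra].
  destruct (Rlt_dec 1 1); [exfalso; lra | reflexivity].
Qed.

Lemma edge_pt_cases e t :
  (exists v, edge_pt ends e t = PV v) \/ (exists h, edge_pt ends e t = Defs.PI e h).
Proof. unfold edge_pt. destruct Rlt_dec; [destruct Rlt_dec|]; eauto. Qed.

Definition edge_image (e : E) : xpt V E -> Prop :=
  fun y => exists t, 0 <= t <= 1 /\ y = edge_pt ends e t.

Lemma edge_image_joins e u w :
  joins ends e u w -> edge_image e (PV u) /\ edge_image e (PV w).
Proof.
  assert (H0 : edge_image e (PV (fst (ends e)))).
  { exists 0. rewrite edge_pt_0. split; [lra | reflexivity]. }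
  assert (H1 : edge_image e (PV (snd (ends e)))).
  { exists 1. rewrite edge_pt_1. split; [lra | reflexivity]. }
  intros [H | H]; rewrite H in H0, H1; simpl in *; auto.
Qed.

Lemma edge_image_connected e : xg_connected ends (edge_image e).
Proof.
  intros [U1 [U2 [o1 [o2 [cov [[x1 [[t1 [ht1 ->]] Ux1]] [[x2 [[t2 [ht2 ->]] Ux2]] disj]]]]]]].
  apply (unit_interval_connected (g1 := fun t => U1 (edge_pt ends e t))
           (g2 := fun t => U2 (edge_pt ends e t)) (t1 := t1) (t2 := t2)); auto.
  - intros t ht h. exact (o1 e t ht h).
  - intros t ht h. exact (o2 e t ht h).
  - intros t ht. apply cov. exists t; auto.
  - intros t ht. apply disj. exists t; auto.
Qed.

Lemma xg_connected_side (A U1 U2 : xpt V E -> Prop) :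
  xg_connected ends A -> xg_open ends U1 -> xg_open ends U2 ->
  (forall x, A x -> U1 x \/ U2 x) -> (forall x, A x -> U1 x -> U2 x -> False) ->
  (forall x, A x -> U1 x) \/ (forall x, A x -> U2 x).
Proof.
  intros HA o1 o2 cov disj. apply NNPP. intros Hn. apply not_or_and in Hn as [n1 n2].
  destruct (not_all_ex_not _ _ n1) as [x1 H1]. destruct (not_all_ex_not _ _ n2) as [x2 H2].
  apply imply_to_and in H1 as [A1 N1]. apply imply_to_and in H2 as [A2 N2].
  apply HA. exists U1, U2. repeat split; auto.
  - exists x2. destruct (cov x2 A2); tauto.
  - exists x1. destruct (cov x1 A1); tauto.
Qed.

Lemma xg_connected_union (A B : xpt V E -> Prop) :
  xg_connected ends A -> xg_connected ends B -> (exists z, A z /\ B z) ->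
  xg_connected ends (fun y => A y \/ B y).
Proof.
  intros HA HB [z [Az Bz]] [U1 [U2 [o1 [o2 [cov [[x1 [Hx1 U1x1]] [[x2 [Hx2 U2x2]] disj]]]]]]].
  destruct (xg_connected_side HA o1 o2 (fun x h => cov x (or_introl h))
              (fun x h => disj x (or_introl h))) as [a | a];
  destruct (xg_connected_side HB o1 o2 (fun x h => cov x (or_intror h))
              (fun x h => disj x (or_intror h))) as [b | b].
  - destruct Hx2 as [h | h]; apply (disj x2); auto.
  - exact (disj z (or_introl Az) (a z Az) (b z Bz)).
  - exact (disj z (or_introl Az) (b z Bz) (a z Az)).
  - destruct Hx1 as [h | h]; apply (disj x1); auto.
Qed.

Definition inner_edges (Z : list (xpt V E)) : list E :=
  flat_map (fun z => match z with PV _ => nil | Defs.PI e _ => e :: nil end) Z.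

Lemma edge_pt_notin_cut (Z : list (xpt V E)) e t :
  (forall z, In z Z -> exists e t, z = Defs.PI e t) -> ~ In e (inner_edges Z) ->
  ~ In (edge_pt ends e t) Z.
Proof.
  intros HZ He Hin. destruct (edge_pt_cases e t) as [[v Hv] | [h Hh]].
  - rewrite Hv in Hin. destruct (HZ _ Hin) as [? [? ?]]. discriminate.
  - rewrite Hh in Hin. apply He, in_flat_map. exists (Defs.PI e h). simpl; auto.
Qed.

Lemma xg_component_walk (Z : list (xpt V E)) x a b :
  (forall z, In z Z -> exists e t, z = Defs.PI e t) ->
  conn_avoid ends (inner_edges Z) a b ->
  xg_component ends (fun y => ~ In y Z) x (PV a) ->
  xg_component ends (fun y => ~ In y Z) x (PV b).
Proof.
  intros HZ. induction 1 as [u | u w y e He Hj _ IH]; [trivial|].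
  intros [A [HAZ [HAc [HAx HAu]]]]. apply IH.
  destruct (edge_image_joins Hj) as [Eu Ew].
  exists (fun q => A q \/ edge_image e q). repeat split.
  - intros q [Hq | [t [_ ->]]]; [exact (HAZ q Hq) | exact (edge_pt_notin_cut HZ He)].
  - apply xg_connected_union; [exact HAc | apply edge_image_connected | eauto].
  - left. exact HAx.
  - right. exact Ew.
Qed.

Lemma basic_set_walk_closed (B : gpt ends -> Prop) : basic_set B -> exists F, forall a b,
  B (inl (PV a)) -> conn_avoid ends F a b -> B (inl (PV b)).
Proof.
  intros [Z [x [HZ [_ HB]]]]. exists (inner_edges Z). intros a b Ha Hab.
  apply HB. apply HB in Ha. exact (xg_component_walk HZ Hab Ha).
Qed.

Definition end_of (R : ray ends) : gend ends :=
  exist _ (edge_equiv R) (ex_intro _ R (fun _ => iff_refl _)).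

Lemma basic_set_end_tail (B : gpt ends -> Prop) R :
  basic_set B -> B (inr (end_of R)) -> tail_in R (fun v => B (inl (PV v))).
Proof.
  intros [Z [x [HZ [_ HB]]]] HR.
  destruct (proj1 (HB _) HR) as [R' [Heq HR']]. simpl in Heq.
  destruct (Heq (inner_edges Z)) as [y [k1 [k2 [H1 H2]]]].
  exists k1. intros n Hn. apply HB.
  apply (xg_component_walk (a := rv R' k2) HZ); [|exact (proj1 (HR' k2))].
  exact (conn_avoid_trans (conn_avoid_sym (proj1 (H2 k2 (le_n k2)))) (proj1 (H1 n Hn))).
Qed.

Section Limits.
Variable bad : E -> Prop.

Definition limit_of_bad (p : gpt ends) : Prop :=
  forall B, basic_set B -> B p ->
    exists e, bad e /\ edge_in ends (fun v => B (inl (PV v))) e.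

Lemma vertex_is_limit v :
  (forall F, rich ends bad (conn_avoid ends F v)) -> limit_of_bad (inl (PV v)).
Proof.
  intros Hv B HB Bv. destruct (basic_set_walk_closed HB) as [F HF].
  destruct (Hv F nil) as [e [[Hb [H1 H2]] _]].
  exists e. repeat split; eauto.
Qed.

Lemma end_is_limit R :
  (forall F, exists x, rich ends bad (conn_avoid ends F x) /\ tail_in R (conn_avoid ends F x)) ->
  limit_of_bad (inr (end_of R)).
Proof.
  intros HR B HB BR. destruct (basic_set_walk_closed HB) as [F HF].
  destruct (basic_set_end_tail HB BR) as [k Hk].
  destruct (HR F) as [x [Hrich [k' Hk']]].
  set (n := Nat.max k k').
  assert (Bn : B (inl (PV (rv R n)))) by (apply Hk, Nat.le_max_l).
  assert (Hnx : conn_avoid ends F (rv R n) x)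
    by (apply conn_avoid_sym, Hk', Nat.le_max_r).
  destruct (Hrich nil) as [e [[Hb [H1 H2]] _]].
  exists e. split; [exact Hb|].
  split; [exact (HF _ _ Bn (conn_avoid_trans Hnx H1)) | exact (HF _ _ Bn (conn_avoid_trans Hnx H2))].
Qed.

Lemma limit_in_open (Y U : gpt ends -> Prop) p :
  limit_of_bad p ->
  (forall e, bad e -> Y (inl (PV (fst (ends e)))) \/ Y (inl (PV (snd (ends e))))) ->
  g_open U -> U p -> exists q, U q /\ Y q.
Proof.
  intros Hlim HY HU Up. destruct (HU p Up) as [B [HB [Bp BU]]].
  destruct (Hlim B HB Bp) as [e [Hb [B1 B2]]].
  destruct (HY e Hb); eauto.
Qed.
End Limits.

Definition cross_edge (O1 O2 : gpt ends -> Prop) (e : E) : Prop :=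
  (O1 (inl (PV (fst (ends e)))) /\ O2 (inl (PV (snd (ends e))))) \/
  (O2 (inl (PV (fst (ends e)))) /\ O1 (inl (PV (snd (ends e))))).

Lemma cross_edges_have_no_limit (X O1 O2 : gpt ends -> Prop) p :
  g_closed X -> g_open_in X O1 -> g_open_in X O2 ->
  (forall q, O1 q -> O2 q -> False) -> (forall q, X q <-> O1 q \/ O2 q) ->
  ~ limit_of_bad (cross_edge O1 O2) p.
Proof.
  intros HX [U1 [HU1 EU1]] [U2 [HU2 EU2]] Hdisj Hcov Hlim.
  destruct (classic (X p)) as [Xp | nXp]; [destruct (proj1 (Hcov p) Xp) as [O1p | O2p]|].
  - assert (HY : forall e, cross_edge O1 O2 e ->
              O2 (inl (PV (fst (ends e)))) \/ O2 (inl (PV (snd (ends e)))))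
      by (unfold cross_edge; tauto).
    destruct (limit_in_open Hlim HY HU1 (proj2 (proj1 (EU1 p) O1p))) as [q [U1q O2q]].
    exact (Hdisj q (proj2 (EU1 q) (conj (proj2 (Hcov q) (or_intror O2q)) U1q)) O2q).
  - assert (HY : forall e, cross_edge O1 O2 e ->
              O1 (inl (PV (fst (ends e)))) \/ O1 (inl (PV (snd (ends e)))))
      by (unfold cross_edge; tauto).
    destruct (limit_in_open Hlim HY HU2 (proj2 (proj1 (EU2 p) O2p))) as [q [U2q O1q]].
    exact (Hdisj q O1q (proj2 (EU2 q) (conj (proj2 (Hcov q) (or_introl O1q)) U2q))).
  - assert (HY : forall e, cross_edge O1 O2 e ->
              X (inl (PV (fst (ends e)))) \/ X (inl (PV (snd (ends e)))))
      by (intros e He; rewrite !Hcov; unfold cross_edge in He; tauto).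
    destruct (limit_in_open Hlim HY HX nXp) as [q [nXq Xq]].
    exact (nXq Xq).
Qed.
End SpaceOfGraph.

Theorem lemma4p2 (V E : Type) (ends : E -> V * V)
  (cV : countable V) (cE : countable E) (conn : graph_connected ends)
  (X O1 O2 : gpt ends -> Prop)
  (HX : g_closed X) (H1 : g_open_in X O1) (H2 : g_open_in X O2)
  (Hdisj : forall p, O1 p -> O2 p -> False)
  (Hcov : forall p, X p <-> O1 p \/ O2 p) :
  exists l : list E, forall e : E,
    (O1 (inl (PV (fst (ends e)))) /\ O2 (inl (PV (snd (ends e))))) \/
    (O2 (inl (PV (fst (ends e)))) /\ O1 (inl (PV (snd (ends e))))) ->
    In e l.
Proof.
  apply NNPP. intros Hinf.
  assert (Hrich : rich ends (cross_edge O1 O2) (fun _ => True)).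
  { apply infinitely_many_intro. intros [l Hl]. apply Hinf. exists l.
    intros e He. apply Hl. repeat split. exact He. }
  destruct (rich_inhabited Hrich) as [v0 _].
  destruct cE as [f f_inj].
  destruct (bad_edges_concentrate f_inj conn v0 Hrich) as [[v Hv] | [R HR]].
  - exact (cross_edges_have_no_limit HX H1 H2 Hdisj Hcov (vertex_is_limit Hv)).
  - exact (cross_edges_have_no_limit HX H1 H2 Hdisj Hcov (end_is_limit HR)).
Qed.
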